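(* For every $\lambda=\sum_{i=1}^r m_i\omega_i\in P^+$, the number of elements of $\mathcal B^r(\lambda)$ (equivalently, the number of families $((\ell_{i,j},\mathbf s_{i,j}))_{1\le i\le j\le r}$ satisfying the defining conditions below) equals $\prod_{i=1}^r\binom{r+1}{i}^{m_i}$.
   Context: $\mathfrak g=\mathfrak{sl}_{r+1}(\mathbb C)$, $\omega_i$ fundamental weights, $P^+=\sum\mathbb N\omega_i$, $x^-_{i,j}=E_{j+1,i}$ for $1\le i\le j\le r$. Let $\mathbf F$ be the set of pairs $(\ell,\mathbf s)$ with $\ell\in\mathbb N$ and $\mathbf s=(\mathbf s(1)\le\dots\le\mathbf s(\ell))\in\mathbb N^\ell$ ($\mathbf s=\emptyset$ if $\ell=0$). For $m\in\mathbb Z$: $\mathbf F(m)=\emptyset$ if $m<0$; for $m\ge0$, $\mathbf F(m)$ consists of $(0,\emptyset)$ and the pairs with $\ell>0$, $\mathbf s(\ell)\le m-\ell$. $\mathbf x^-_{i,j}(\ell,\mathbf s)=\prod_{p=1}^\ell(x^-_{i,j}\otimes t^{\mathbf s(p)})\in U(\mathfrak n^-[t])$. $\mathcal B^r(\lambda)$ is the set of ordered products $\prod_{j=1}^r\prod_{i=1}^j\mathbf x^-_{i,j}(\ell_{i,j},\mathbf s_{i,j})$ (ordered by increasing $j$, then increasing $i$) with $(\ell_{i,j},\mathbf s_{i,j})\in\mathbf F(m_{i,j})$ for all $1\le i\le j\le r$, where $m_{i,j}=m_i+\sum_{s=j+1}^r(\ell_{i+1,s}-\ell_{i,s})$; these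 are distinct PBW monomials. *)

From mathcomp Require Import all_boot all_order all_algebra.
Set Implicit Arguments. Unset Strict Implicit. Unset Printing Implicit Defensive.
Import Order.TTheory GRing.Theory Num.Theory.

(* Indices are 1-based as in the paper: a bfam is a finite function on
   'I_r.+1 * 'I_r.+1; only the entries (i,j) with 1 <= i <= j <= r are
   meaningful, the others are required to be the default (0, [::]).
   An entry is a pair (ell, s) with s : seq nat representing s(1..ell). *)

Definition entry := (nat * seq nat)%type.
Definition empty_entry : entry := (0%N, [::]).

Definition bfam (r : nat) := {ffun 'I_r.+1 * 'I_r.+1 -> entry}.

Definition fam_at (r : nat) (f : bfam r) (i j : nat) : entry :=
  match (insub i : option 'I_r.+1), (insub j : option 'I_r.+1) with
  | Some i', Some j' => f (i', j')
  | _, _ => empty_entry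
  end.

Definition ell (r : nat) (f : bfam r) (i j : nat) : nat := (fam_at f i j).1.

Definition inF (m : int) (p : entry) : bool :=
  (0 <= m)%R &&
  ((p == empty_entry) ||
   [&& (0 < p.1)%N, size p.2 == p.1, sorted leq p.2 &
       ((last 0%N p.2 + p.1)%:Z <= m)%R]).

Definition mij (r : nat) (m : nat -> nat) (f : bfam r) (i j : nat) : int :=
  ((m i)%:Z + \sum_(j.+1 <= s < r.+1) ((ell f i.+1 s)%:Z - (ell f i s)%:Z))%R.

(* the defining conditions of B^r(lambda), lambda = sum_i m_i omega_i *)
Definition valid_family (r : nat) (m : nat -> nat) (f : bfam r) : bool :=
  [forall i : 'I_r.+1, forall j : 'I_r.+1,
     if (1 <= i <= j)%N then inF (mij m f i j) (f (i, j))
     else f (i, j) == empty_entry].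

From mathcomp Require Import all_boot all_order all_algebra zify.
Set Implicit Arguments. Unset Strict Implicit. Unset Printing Implicit Defensive.

(* Induction on r by splitting off the last column j = r + 1.  Its entries
   (i, r + 1) are constrained by m_{i,r+1} = m_i alone, and once they are
   fixed the remaining entries form a family for r with the shifted weights
   m'_i = m_i + ell_{i+1,r+1} - ell_{i,r+1}.  The elements of F(mu) of length
   ell are counted by C(mu, ell), so summing the inductive count
   prod_i C(r+1,i)^{m'_i} over the last column factors into
   prod_i (C(r+1,i) + C(r+1,i-1))^{m_i} = prod_i C(r+2,i)^{m_i}. *)

Definition fam_of (r : nat) (h : nat -> nat -> entry) : bfam r :=
  [ffun p : 'I_r.+1 * 'I_r.+1 => h p.1 p.2].

Lemma fam_at_of r h i j :
  fam_at (fam_of r h) i j = if (i <= r) && (j <= r) then h i j else empty_entry.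
Proof.
rewrite /fam_at.
case: (@insubP _ _ 'I_r.+1 i) => [i' Hi Ei|Hi];
  case: (@insubP _ _ 'I_r.+1 j) => [j' Hj Ej|Hj] /=; rewrite ?ltnS in Hi Hj.
- by rewrite ffunE /= Ei Ej Hi Hj.
- by rewrite Hi (negbTE Hj).
- by rewrite (negbTE Hi).
- by rewrite (negbTE Hi).
Qed.

Lemma fam_at_ord r (f : bfam r) (i j : 'I_r.+1) : fam_at f i j = f (i, j).
Proof. by rewrite /fam_at !valK. Qed.

Lemma fam_at_out r (f : bfam r) i j :
  ~~ ((i <= r) && (j <= r)) -> fam_at f i j = empty_entry.
Proof.
rewrite /fam_at.
case: (@insubP _ _ 'I_r.+1 i) => [i' Hi _|//]; case: (@insubP _ _ 'I_r.+1 j) => [j' Hj _|//].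
by move: Hi Hj; rewrite !ltnS => -> ->.
Qed.

Lemma validP r m (f : bfam r) :
  reflect (forall i j, i <= r -> j <= r ->
             if 1 <= i <= j then inF (mij m f i j) (fam_at f i j)
             else fam_at f i j == empty_entry)
          (valid_family m f).
Proof.
apply: (iffP forallP) => [H i j Hi Hj|H i].
- by move: (forallP (H (@Ordinal r.+1 i Hi)) (@Ordinal r.+1 j Hj)); rewrite -fam_at_ord.
- by apply/forallP => j; rewrite -fam_at_ord; apply: H; rewrite -ltnS.
Qed.

Definition inFn (mu : nat) (e : entry) : bool :=
  [&& size e.2 == e.1, sorted leq e.2 & last 0 e.2 + e.1 <= mu].

Lemma inF_nat (mu : nat) e : inF (Posz mu) e = inFn mu e.
Proof.
by case: e => [l s]; rewrite /inF /inFn /= lez_nat /=; case: l => [|l] //=; case: s.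
Qed.

Lemma inFn_len mu e : inFn mu e -> e.1 <= mu.
Proof. by case/and3P => _ _; apply: leq_trans; apply: leq_addl. Qed.

Lemma inF_len (mu : nat) e : inF (Posz mu) e -> e.1 <= mu.
Proof. by rewrite inF_nat; apply: inFn_len. Qed.

Definition Fpush (mu : nat) (e : entry) : entry := (e.1.+1, rcons e.2 (mu - e.1)).

(* An element of F(mu + 1) outside F(mu) satisfies s(ell) + ell = mu + 1, so
   it is the push of an element of F(mu). *)
Fixpoint Fseq (mu : nat) : seq entry :=
  if mu is mu'.+1 then Fseq mu' ++ map (Fpush mu') (Fseq mu') else [:: empty_entry].

Lemma sorted_leq_rcons (s : seq nat) x :
  sorted leq (rcons s x) = sorted leq s && (last 0 s <= x).
Proof. by case: s => [|a s] //=; rewrite rcons_path. Qed.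

Lemma inFn_Fpush mu e : inFn mu.+1 (Fpush mu e) = inFn mu e.
Proof.
case: e => l s; rewrite /inFn /Fpush /= size_rcons last_rcons sorted_leq_rcons eqSS.
by case: (size s == l); case: (sorted leq s) => //=; apply/idP/idP; lia.
Qed.

Lemma mem_Fseq mu e : (e \in Fseq mu) = inFn mu e.
Proof.
elim: mu e => [|mu IH] [l s].
  rewrite inE /inFn /=; case: s => [|a s] /=; first by case: l.
  by apply/idP/idP => [/eqP[]|/and3P[/eqP <- _]] //=; lia.
rewrite /= mem_cat IH; apply/idP/idP.
  case/orP => [|/mapP[e' He' ->]]; last by rewrite inFn_Fpush -IH.
  by rewrite /inFn /= => /and3P[-> -> ?]; apply: leqW.
rewrite /inFn /= => /and3P[/eqP Hs Hsort Hlast].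
have [_|Hgt] := leqP (last 0 s + l) mu; first by rewrite Hs eqxx Hsort.
apply/orP; right; apply/mapP.
case/lastP: s Hs Hsort Hlast Hgt => [|s x] Hs Hsort Hlast Hgt; first by rewrite -Hs in Hgt.
move: Hs Hsort Hlast Hgt; rewrite size_rcons last_rcons => Hs Hsort Hlast Hgt.
exists (size s, s); last by rewrite /Fpush /=; congr (_, rcons _ _); lia.
move: Hsort; rewrite IH /inFn /= eqxx sorted_leq_rcons => /andP[-> Hx] /=; lia.
Qed.

Lemma Fseq_uniq mu : uniq (Fseq mu).
Proof.
elim: mu => [//|mu IH] /=; rewrite cat_uniq IH /=; apply/andP; split.
  apply/hasPn => _ /mapP[e He ->]; rewrite /= mem_Fseq /inFn /Fpush /= last_rcons.
  by move: He; rewrite mem_Fseq => /inFn_len ?; rewrite !negb_and; apply/orP; right; lia.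
rewrite map_inj_uniq // => -[l1 s1] [l2 s2] [El /rcons_inj[-> _]].
by rewrite El.
Qed.

(* Equivalently, F(mu) has C(mu, ell) elements of length ell. *)
Lemma Fseq_binomial mu x y :
  \sum_(e <- Fseq mu) x ^ (mu - e.1) * y ^ e.1 = (x + y) ^ mu.
Proof.
elim: mu => [|mu IH] /=; first by rewrite big_seq1.
rewrite big_cat big_map /= expnS mulnDl -IH !big_distrr /=; congr (_ + _).
  by apply: eq_big_seq => e; rewrite mem_Fseq => /inFn_len ?; rewrite subSn // expnS mulnA.
by apply: eq_bigr => e _; rewrite subSS expnS mulnCA.
Qed.

(* A column c : seq entry lists the entries (1, r+1), ..., (r+1, r+1). *)
Definition add_column (r : nat) (c : seq entry) (g : bfam r) : bfam r.+1 :=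
  fam_of r.+1 (fun i j =>
    if j == r.+1 then (if 0 < i then nth empty_entry c i.-1 else empty_entry)
    else fam_at g i j).

Definition last_column (r : nat) (f : bfam r.+1) : seq entry :=
  [seq fam_at f i r.+1 | i <- iota 1 r.+1].

Definition drop_column (r : nat) (f : bfam r.+1) : bfam r := fam_of r (fam_at f).

Definition column_valid (r : nat) (m : nat -> nat) (c : seq entry) : bool :=
  all (fun k => inF (Posz (m k.+1)) (nth empty_entry c k)) (iota 0 r.+1).

(* The truncated subtraction is harmless: ell_{i,r+1} <= m_i in a valid column. *)
Definition shift_weights (m : nat -> nat) (c : seq entry) (i : nat) : nat :=
  m i + (nth empty_entry c i).1 - (nth empty_entry c i.-1).1.

Lemma column_validP r m c :
  reflect (forall i, 0 < i <= r.+1 -> inF (Posz (m i)) (nth empty_entry c i.-1))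
          (column_valid r m c).
Proof.
apply: (iffP allP) => [H i /andP[Hi Hir]|H k].
  by rewrite -(prednK Hi) in Hir *; apply: H; rewrite mem_iota.
by rewrite mem_iota => /andP[_ Hk]; apply: (H k.+1).
Qed.

Lemma fam_at_add_column r c (g : bfam r) i j :
  j <= r -> fam_at (add_column c g) i j = fam_at g i j.
Proof.
move=> Hj; rewrite fam_at_of (ltn_eqF (Hj : j < r.+1)).
by case: ifP => // /negbT H; rewrite fam_at_out //; move: H; lia.
Qed.

Lemma fam_at_add_column_last r c (g : bfam r) i :
  size c = r.+1 -> fam_at (add_column c g) i r.+1 =
                   if 0 < i then nth empty_entry c i.-1 else empty_entry.
Proof.
move=> Hc; rewrite fam_at_of eqxx leqnn andbT.
by case: ifP => // /negbT Hi; case: posnP => // _; rewrite nth_default // Hc; lia.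
Qed.

Lemma mij_add_column_last r m c (g : bfam r) i :
  mij m (add_column c g) i r.+1 = Posz (m i).
Proof. by rewrite /mij big_geq // GRing.addr0. Qed.

Lemma mij_add_column r m c (g : bfam r) i j : size c = r.+1 -> 0 < i ->
  (nth empty_entry c i.-1).1 <= m i -> j <= r ->
  mij m (add_column c g) i j = mij (shift_weights m c) g i j.
Proof.
move=> Hc Hi Hle Hj; rewrite /mij big_nat_recr //=.
under eq_big_nat => s /andP[_ Hs] do rewrite /ell !fam_at_add_column //.
rewrite /ell !fam_at_add_column_last //= Hi /shift_weights.
set S := (\sum_(_ <= _ < _) _)%R; lia.
Qed.

Lemma column_valid_len r m c i :
  column_valid r m c -> 0 < i <= r.+1 -> (nth empty_entry c i.-1).1 <= m i.
Proof. by move/column_validP => Hc /Hc; apply: inF_len. Qed.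

Lemma valid_add_column r m c (g : bfam r) : size c = r.+1 ->
  valid_family m (add_column c g) =
  column_valid r m c && valid_family (shift_weights m c) g.
Proof.
move=> Hc; apply/validP/andP => [H|[Hcol /validP Hg] i j Hi Hj].
  have Hcol : column_valid r m c.
    apply/column_validP => i /andP[Hi Hir]; move: (H i r.+1 Hir (leqnn _)).
    by rewrite Hi Hir mij_add_column_last fam_at_add_column_last // Hi.
  split=> //; apply/validP => i j Hi Hj; move: (H i j (leqW Hi) (leqW Hj)).
  rewrite fam_at_add_column //; case: ifP => // /andP[H1 H2].
  by rewrite mij_add_column //; apply: column_valid_len Hcol _; rewrite H1 /=; lia.
have [->|Hjr] := eqVneq j r.+1.
  rewrite mij_add_column_last fam_at_add_column_last //.
  case: posnP => [->|Hi0] //=; rewrite Hi.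
  by move/column_validP: Hcol; apply; rewrite Hi0.
have {Hj Hjr} Hj : j <= r by lia.
rewrite fam_at_add_column //; have [Hir|Hir] := leqP i r.
  move: (Hg i j Hir Hj); case: ifP => // /andP[H1 H2].
  by rewrite mij_add_column //; apply: column_valid_len Hcol _; rewrite H1 /=; lia.
rewrite fam_at_out; last by rewrite leqNgt Hir.
by case: ifP => // /andP[_ Hij]; lia.
Qed.

Lemma last_column_add r c (g : bfam r) :
  size c = r.+1 -> last_column (add_column c g) = c.
Proof.
move=> Hc; apply: (@eq_from_nth _ empty_entry); first by rewrite size_map size_iota Hc.
move=> k; rewrite size_map size_iota => Hk.
by rewrite (nth_map 0) ?size_iota // nth_iota // fam_at_add_column_last.
Qed.

Lemma drop_column_add r c (g : bfam r) : drop_column (add_column c g) = g.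
Proof.
apply/ffunP => -[i j]; rewrite ffunE /= fam_at_add_column ?fam_at_ord //.
by rewrite -ltnS ltn_ord.
Qed.

Lemma add_column_inj r (c c' : seq entry) (g g' : bfam r) :
  size c = r.+1 -> size c' = r.+1 ->
  add_column c g = add_column c' g' -> c = c' /\ g = g'.
Proof.
move=> Hc Hc' E; rewrite -(drop_column_add c g) -(drop_column_add c' g') E.
by rewrite -(last_column_add g Hc) -(last_column_add g' Hc') E.
Qed.

Lemma size_last_column r (f : bfam r.+1) : size (last_column f) = r.+1.
Proof. by rewrite size_map size_iota. Qed.

Lemma add_last_column r m (f : bfam r.+1) :
  valid_family m f -> add_column (last_column f) (drop_column f) = f.
Proof.
move/validP => H; apply/ffunP => -[i j]; rewrite ffunE /=.
have [Hi Hj] : i <= r.+1 /\ j <= r.+1 by split; [exact: ltn_ord i|exact: ltn_ord j].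
have := H i j Hi Hj; rewrite fam_at_ord.
have [Ej|Nj] := eqVneq (j : nat) r.+1.
  case: posnP => [Ei|Ei _]; first by rewrite Ei => /eqP.
  rewrite (nth_map 0) ?size_iota ?nth_iota; try lia.
  by rewrite add1n prednK // -fam_at_ord Ej.
rewrite fam_at_of; have -> /= : j <= r by lia.
have [Hir _|Hri] := leqP i r; first by rewrite fam_at_ord.
by case: ifP => [/andP[_ Hij]|_ /eqP //]; lia.
Qed.

Fixpoint seq_prod (T : Type) (ls : seq (seq T)) : seq (seq T) :=
  if ls is l :: ls' then [seq x :: y | x <- l, y <- seq_prod ls'] else [:: [::]].

Lemma mem_seq_prod (T : eqType) x0 (ls : seq (seq T)) c :
  reflect (size c = size ls /\ forall k, k < size ls -> nth x0 c k \in nth [::] ls k)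
          (c \in seq_prod ls).
Proof.
elim: ls c => [|l ls IH] c /=.
  by rewrite inE; apply: (iffP eqP) => [->|[/size0nil]].
apply: (iffP allpairsP) => [[[x y] /= [Hx /IH[Hy Hk] ->]]|].
  by split=> [|[|k]] //=; [rewrite Hy|exact: Hk].
case: c => [|x y] [//= [Hs] Hk]; exists (x, y); split=> //; first exact: (Hk 0).
by apply/IH; split=> // k; apply: (Hk k.+1).
Qed.

Lemma seq_prod_uniq (T : eqType) (ls : seq (seq T)) : all uniq ls -> uniq (seq_prod ls).
Proof.
elim: ls => [//|l ls IH] /= /andP[Hl Hls].
by apply: allpairs_uniq => //; [exact: IH|move=> [x y] [x' y'] _ _ /= [-> ->]].
Qed.

Lemma sum_seq_prod (T : Type) x0 (ls : seq (seq T)) (F : nat -> T -> nat) :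
  \sum_(c <- seq_prod ls) \prod_(k < size ls) F k (nth x0 c k) =
  \prod_(k < size ls) \sum_(e <- nth [::] ls k) F k e.
Proof.
elim: ls F => [|l ls IH] F /=; first by rewrite big_seq1 !big_ord0.
rewrite big_allpairs_dep big_ord_recl big_distrl /=; apply: eq_bigr => x _.
rewrite -(IH (fun k => F k.+1)) big_distrr /=.
by apply: eq_bigr => y _; rewrite big_ord_recl.
Qed.

Definition columns (r : nat) (m : nat -> nat) : seq (seq entry) :=
  seq_prod [seq Fseq (m i) | i <- iota 1 r.+1].

Lemma mem_columns r m c :
  (c \in columns r m) = (size c == r.+1) && column_valid r m c.
Proof.
apply/(mem_seq_prod empty_entry)/andP; rewrite size_map size_iota.
  case=> Hs Hk; rewrite Hs; split=> //; apply/allP => k; rewrite mem_iota => /andP[_ Hkr].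
  by move: (Hk k Hkr); rewrite (nth_map 0) ?size_iota // nth_iota // mem_Fseq inF_nat.
case=> /eqP Hs /allP Hc; split=> // k Hk; move: (Hc k); rewrite mem_iota Hk => /(_ isT).
by rewrite (nth_map 0) ?size_iota // nth_iota // mem_Fseq inF_nat.
Qed.

Fixpoint families (r : nat) : (nat -> nat) -> seq (bfam r) :=
  if r is r'.+1 then fun m =>
    [seq add_column c g | c <- columns r' m, g <- families r' (shift_weights m c)]
  else fun _ => [:: fam_of 0 (fun _ _ => empty_entry)].

Lemma families_uniq r m : uniq (families r m).
Proof.
elim: r m => [//|r IH] m /=; apply: allpairs_uniq_dep => [|c _|[c g] [c' g']].
- by apply: seq_prod_uniq; apply/allP => _ /mapP[i _ ->]; apply: Fseq_uniq.
- exact: IH.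
move=> /allpairsPdep[x [_ [Hx _ /(congr1 tag) /= ->]]].
move=> /allpairsPdep[x' [_ [Hx' _ /(congr1 tag) /= ->]]] /= E.
move: Hx Hx'; rewrite !mem_columns => /andP[/eqP Hx _] /andP[/eqP Hx' _].
by case: (add_column_inj Hx Hx' E) => -> ->.
Qed.

Lemma mem_families r m f : (f \in families r m) = valid_family m f.
Proof.
elim: r m f => [|r IH] m f /=.
  rewrite inE; apply/eqP/validP => [-> i j|H].
    by rewrite !leqn0 => /eqP -> /eqP ->; rewrite fam_at_of.
  apply/ffunP => -[i j]; rewrite ffunE /=; move: (H i j (ltn_ord i) (ltn_ord j)).
  by rewrite fam_at_ord; case: i j => [[|i] Hi] [[|j] Hj] //= /eqP ->.
apply/allpairsPdep/idP => [[c [g [Hc Hg ->]]]|Hf].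
  move: Hc Hg; rewrite mem_columns IH => /andP[/eqP Hs Hcol] Hg.
  by rewrite valid_add_column // Hcol.
have Hf' := Hf.
rewrite -(add_last_column Hf) valid_add_column ?size_last_column // in Hf'.
case/andP: Hf' => Hcol Hg; exists (last_column f), (drop_column f).
by rewrite mem_columns size_last_column eqxx Hcol IH Hg (add_last_column Hf).
Qed.

Definition column_weight (r : nat) (m : nat -> nat) (k : nat) (e : entry) : nat :=
  'C(r.+1, k.+1) ^ (m k.+1 - e.1) * 'C(r.+1, k) ^ e.1.

Lemma prod_binomial_shift_weights r m c : column_valid r m c ->
  \prod_(1 <= i < r.+1) 'C(r.+1, i) ^ shift_weights m c i =
  \prod_(k < r.+1) column_weight r m k (nth empty_entry c k).
Proof.
move=> Hc; rewrite big_split /= big_ord_recr big_ord_recl /= binn bin0 !exp1n muln1 mul1n.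
rewrite big_add1 /= big_mkord -big_split /=; apply: eq_bigr => k _.
have Hk : (nth empty_entry c k).1 <= m k.+1.
  by apply: (column_valid_len Hc); rewrite /= ltnS ltnW.
by rewrite /bump /= add1n -expnD /shift_weights /=; congr (_ ^ _); lia.
Qed.

Lemma size_families r m :
  size (families r m) = \prod_(1 <= i < r.+1) 'C(r.+1, i) ^ m i.
Proof.
elim: r m => [|r IH] m /=; first by rewrite big_geq.
rewrite size_allpairs_dep sumnE big_map.
rewrite (eq_big_seq (fun c => \prod_(k < r.+1) column_weight r m k (nth empty_entry c k))).
  have := sum_seq_prod empty_entry [seq Fseq (m i) | i <- iota 1 r.+1] (column_weight r m).
  rewrite size_map size_iota => ->.
  rewrite big_add1 big_mkord; apply: eq_bigr => k _.
  by rewrite (nth_map 0) ?size_iota // nth_iota // add1n Fseq_binomial -binS.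
by move=> c; rewrite mem_columns => /andP[_ Hc]; rewrite IH prod_binomial_shift_weights.
Qed.

Theorem proposition2p1 (r : nat) (m : nat -> nat) :
  exists s : seq (bfam r),
    [/\ uniq s,
        forall f : bfam r, (f \in s) = valid_family m f
      & size s = (\prod_(1 <= i < r.+1) 'C(r.+1, i) ^ m i)%N].
Proof.
exists (families r m); split; [exact: families_uniq|exact: mem_families|exact: size_families].
Qed.
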